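(* Let $w\in\mathbb{R}^n$ have positive entries with $\max_{i,j}w_i/w_j\le b$, let $\widehat W\in\mathbb{R}^n$ have positive entries, set $\rho_{ij}=w_i/w_j$, and let $s_{ij}\ge0$ ($i,j=1,\dots,n$) be such that $$\left[\frac{\widehat W_i}{\widehat W_j}-\rho_{ij}\right]^2\le\rho_{ij}^2\,s_{ij}\quad\text{for all }i,j.$$ Then for every $\ell\in\{1,\dots,n\}$, $\sin(w,\widehat W)^2\le\max_j s_{j\ell}$, and moreover $\sin(w,\widehat W)^2\le b^2 s_{\rm avg}$, where $s_{\rm avg}=\frac1{n^2}\sum_{a,c=1}^n s_{ac}$.
   Context: $\sin(x,y)$ denotes the sine of the angle between nonzero vectors $x,y\in\mathbb{R}^n$. *)

From mathcomp Require Import all_boot all_order all_algebra.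
Set Implicit Arguments. Unset Strict Implicit. Unset Printing Implicit Defensive.
Import Order.TTheory GRing.Theory Num.Theory.
Local Open Scope ring_scope.

Definition dotv (R : rcfType) (n : nat) (x y : 'rV[R]_n) : R :=
  \sum_(i < n) x 0 i * y 0 i.
Definition normv (R : rcfType) (n : nat) (x : 'rV[R]_n) : R :=
  Num.sqrt (dotv x x).

Definition cosv (R : rcfType) (n : nat) (x y : 'rV[R]_n) : R :=
  dotv x y / (normv x * normv y).
Definition sinv (R : rcfType) (n : nat) (x y : 'rV[R]_n) : R :=
  Num.sqrt (1 - cosv x y ^+ 2).

From mathcomp Require Import all_boot all_order all_algebra.
From mathcomp Require Import ring.

Set Implicit Arguments.
Unset Strict Implicit.
Unset Printing Implicit Defensive.
Import Order.TTheory GRing.Theory Num.Theory.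
Local Open Scope ring_scope.

(* Since [sin(w, v)^2 |w|^2] is the squared distance from [w] to the line
   spanned by [v], it is at most [|w - t v|^2] for every [t].  Taking
   [t = w_l / What_l] turns the j-th coordinate of [w - t What] into
   [w_l (What_j/What_l - w_j/w_l)], whose square is at most [w_j^2 s_jl] by
   hypothesis.  Hence [sin^2] is bounded by the mean of the [s_jl] (j varying)
   with weights [w_j^2 / |w|^2]; these weights sum to one, and the ratio bound
   [b] makes each of them at most [b^2 / n].  The first inequality follows for
   every [l], and averaging it over [l] gives the second. *)

Lemma dotvv (R : rcfType) (n : nat) (x : 'rV[R]_n) :
  dotv x x = \sum_(i < n) x 0 i ^+ 2.
Proof. by apply: eq_bigr => i _; rewrite expr2. Qed.

Lemma dotv_gt0 (R : rcfType) (n : nat) (x : 'rV[R]_n) :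
  (0 < n)%N -> (forall i, 0 < x 0 i) -> 0 < dotv x x.
Proof.
move=> n_gt0 x_gt0; rewrite dotvv (bigD1 (Ordinal n_gt0)) //=.
by rewrite ltr_wpDr ?exprn_gt0 // sumr_ge0 // => i _; rewrite sqr_ge0.
Qed.

Lemma dotv_subZ (R : rcfType) (n : nat) (w v : 'rV[R]_n) (t : R) :
  dotv (w - t *: v) (w - t *: v)
    = dotv w w - 2 * t * dotv w v + t ^+ 2 * dotv v v.
Proof.
rewrite /dotv !mulr_sumr -sumrB -big_split /=.
by apply: eq_bigr => i _; rewrite !mxE; ring.
Qed.

Lemma sqr_sinv_le_dist (R : rcfType) (n : nat) (w v : 'rV[R]_n) (t : R) :
  0 < dotv w w -> 0 < dotv v v ->
  sinv w v ^+ 2 <= dotv (w - t *: v) (w - t *: v) / dotv w w.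
Proof.
move=> D_gt0 E_gt0; rewrite dotv_subZ /sinv /cosv /normv.
set D := dotv w w; set E := dotv v v; set P := dotv w v.
have [sin2_le0 | sin2_gt0] := leP (1 - (P / (Num.sqrt D * Num.sqrt E)) ^+ 2) 0.
  rewrite ler0_sqrtr // expr0n /= -dotv_subZ divr_ge0 ?(ltW D_gt0) //.
  by rewrite dotvv sumr_ge0 // => i _; rewrite sqr_ge0.
rewrite sqr_sqrtr ?(ltW sin2_gt0) // expr_div_n exprMn.
rewrite !sqr_sqrtr ?(ltW D_gt0) ?(ltW E_gt0) // -subr_ge0.
have -> : (D - 2 * t * P + t ^+ 2 * E) / D - (1 - P ^+ 2 / (D * E))
          = (t * E - P) ^+ 2 / (D * E).
  by field; rewrite !gt_eqF.
by rewrite divr_ge0 ?sqr_ge0 // ltW // mulr_gt0.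
Qed.

Lemma sum_weighted_le_bigmax (R : realDomainType) (I : finType) (a x : I -> R) :
  (forall i, 0 <= a i) ->
  \sum_i a i * x i <= (\sum_i a i) * \big[Num.max/0]_i x i.
Proof.
move=> a_ge0; rewrite mulr_suml; apply: ler_sum => i _.
by rewrite ler_wpM2l // le_bigmax.
Qed.

Section RatioPerturbation.

Variables (R : rcfType) (n : nat) (w What : 'rV[R]_n).
Hypotheses (n_gt0 : (0 < n)%N) (w_gt0 : forall i, 0 < w 0 i).

Let D_gt0 : 0 < dotv w w. Proof. exact: dotv_gt0. Qed.

Definition sqr_weight (j : 'I_n) : R := w 0 j ^+ 2 / dotv w w.

Lemma sqr_weight_ge0 j : 0 <= sqr_weight j.
Proof. by rewrite divr_ge0 ?sqr_ge0 ?ltW. Qed.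

Lemma sum_sqr_weight : \sum_j sqr_weight j = 1.
Proof. by rewrite -mulr_suml -dotvv divff ?gt_eqF. Qed.

Lemma sqr_weight_le (b : R) :
  (forall i j, w 0 i / w 0 j <= b) -> forall j, sqr_weight j <= b ^+ 2 / n%:R.
Proof.
move=> ratio_le_b j; have nR_gt0 : 0 < n%:R :> R by rewrite ltr0n.
rewrite /sqr_weight ler_pdivrMr // mulrAC ler_pdivlMr // mulrC mulr_natl.
have -> : w 0 j ^+ 2 *+ n = \sum_(k < n) w 0 j ^+ 2 by rewrite sumr_const card_ord.
rewrite dotvv mulr_sumr; apply: ler_sum => k _.
have wj_le : w 0 j <= b * w 0 k by rewrite -ler_pdivrMr.
rewrite -exprMn ler_sqr ?nnegrE ?(ltW (w_gt0 j)) //.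
exact: le_trans (ltW (w_gt0 j)) wj_le.
Qed.

Hypothesis What_gt0 : forall i, 0 < What 0 i.

Lemma sqr_sinv_le_weighted_mean (s : 'I_n -> 'I_n -> R) :
  (forall i j, (What 0 i / What 0 j - w 0 i / w 0 j) ^+ 2
                 <= (w 0 i / w 0 j) ^+ 2 * s i j) ->
  forall l, sinv w What ^+ 2 <= \sum_j sqr_weight j * s j l.
Proof.
move=> hs l.
have E_gt0 : 0 < dotv What What by exact: dotv_gt0.
apply: le_trans (sqr_sinv_le_dist (w 0 l / What 0 l) D_gt0 E_gt0) _.
rewrite dotvv mulr_suml; apply: ler_sum => j _.
rewrite !mxE /sqr_weight [leRHS]mulrAC ler_wpM2r ?invr_ge0 ?(ltW D_gt0) //.
have wl_gt0 := w_gt0 l; have Wl_gt0 := What_gt0 l.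
have -> : (w 0 j - w 0 l / What 0 l * What 0 j) ^+ 2
          = w 0 l ^+ 2 * (What 0 j / What 0 l - w 0 j / w 0 l) ^+ 2.
  by field; rewrite !gt_eqF.
have -> : w 0 j ^+ 2 * s j l = w 0 l ^+ 2 * ((w 0 j / w 0 l) ^+ 2 * s j l).
  by field; rewrite gt_eqF.
by rewrite ler_wpM2l ?sqr_ge0.
Qed.

End RatioPerturbation.

Theorem lemma7 (R : rcfType) (n : nat) (hn : (0 < n)%N)
  (w What : 'rV[R]_n) (b : R) (s : 'I_n -> 'I_n -> R)
  (hw : forall i, 0 < w 0 i)
  (hb : forall i j, w 0 i / w 0 j <= b)
  (hW : forall i, 0 < What 0 i)
  (hs0 : forall i j, 0 <= s i j)
  (hs : forall i j,
      (What 0 i / What 0 j - w 0 i / w 0 j) ^+ 2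
        <= (w 0 i / w 0 j) ^+ 2 * s i j) :
  (forall l : 'I_n, sinv w What ^+ 2 <= \big[Num.max/0]_(j < n) s j l) /\
  sinv w What ^+ 2
    <= b ^+ 2 * ((n%:R ^+ 2)^-1 * \sum_(a < n) \sum_(c < n) s a c).
Proof.
have sin_le := sqr_sinv_le_weighted_mean hn hw hW hs.
split=> [l|].
  apply: le_trans (sin_le l) _.
  rewrite -[X in _ <= X]mul1r -(sum_sqr_weight hn hw).
  exact: sum_weighted_le_bigmax (sqr_weight_ge0 hn hw).
have nR_gt0 : 0 < n%:R :> R by rewrite ltr0n.
rewrite -(ler_pM2l nR_gt0).
have -> : n%:R * sinv w What ^+ 2 = \sum_(c < n) sinv w What ^+ 2.
  by rewrite sumr_const card_ord mulr_natl.
have -> : n%:R * (b ^+ 2 * ((n%:R ^+ 2)^-1 * \sum_(a < n) \sum_(c < n) s a c))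
          = b ^+ 2 / n%:R * \sum_(c < n) \sum_(a < n) s a c.
  by rewrite [in RHS]exchange_big /=; field; rewrite gt_eqF.
rewrite mulr_sumr; apply: ler_sum => c _; rewrite mulr_sumr.
apply: le_trans (sin_le c) _.
by apply: ler_sum => a _; rewrite ler_wpM2r // sqr_weight_le.
Qed.
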